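(* Let $(T,f,(\le_h))$ be an ordered merge tree and let $\sqsubseteq_L$ be the relation on $L(T)$ given by $u_1\sqsubseteq_L u_2$ iff $\mathrm{anc}_h(u_1)\le_h\mathrm{anc}_h(u_2)$ with $h=\max(f(u_1),f(u_2))$. Then $\sqsubseteq_L$ separates subtrees: for all leaves $u,u_1,u_2\in L(T)$ with $u_1\sqsubseteq_L u\sqsubseteq_L u_2$, we have $u\in T_{\mathrm{lca}(u_1,u_2)}$.
   Context: A merge tree $(T,f)$: a finite rooted tree $T$ identified with its topological realisation, with a continuous $f\colon T\to\mathbb{R}\cup\{\infty\}$ strictly increasing towards the root, $f(v)=\infty$ iff $v$ is the root; lowest leaf at height $0$; $L(T)$ is the set of leaves. $x_1\preceq x_2$ iff there is an $f$-increasing path from $x_1$ to $x_2$; $T_x$ is the subtree of descendants of $x$; $\mathrm{lca}$ is the lowest common ancestor; $\mathrm{anc}_h(x)$ is the unique ancestor of $x$ at height $h\ge f(x)$; $\mathbb{L}_h=\{x:f(x)=h\}$. A layer-order is a family $(\le_h)_{h\ge0}$ of total orders on the $\mathbb{L}_h$ that is consistent: for $h_1\le h_2$ and $x_1,x_2\in\mathbb{L}_{h_1}$, $x_1\le_{h_1}x_2$ implies $\mathrm{anc}_{h_2}(x_1)\le_{h_2}\mathrm{anc}_{h_2}(x_2)$. An ordered merge tree is $(T,f,(\le_h))$. *)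

From Stdlib Require Import Reals.
From mathcomp Require Import all_boot.
Set Implicit Arguments. Unset Strict Implicit.

Definition anc (V : Type) (par : V -> V) (x y : V) : Prop :=
  exists n : nat, iter n par x = y.

Definition is_leaf (V : Type) (r : V) (par : V -> V) (u : V) : Prop :=
  u <> r /\ forall w, par w <> u.

(* A merge tree, given combinatorially: finite vertex set, root, parent map
   (par root = root), and heights of the non-root vertices; the root has
   height +infinity (the value mt_f mt_root is irrelevant and never used). *)
Record merge_tree := MergeTree {
  mt_V : finType;
  mt_root : mt_V;
  mt_par : mt_V -> mt_V;
  mt_f : mt_V -> R;
  mt_par_root : mt_par mt_root = mt_root;
  mt_rooted : forall v, anc mt_par v mt_root;
  mt_incr : forall v, v <> mt_root -> mt_par v <> mt_root ->
              Rlt (mt_f v) (mt_f (mt_par v));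
  mt_lowest_leaf : (exists u, is_leaf mt_root mt_par u /\ mt_f u = R0) /\
                   (forall u, is_leaf mt_root mt_par u -> Rle R0 (mt_f u))
}.

Section MT.
Variable T : merge_tree.
Local Notation V := (mt_V T).
Local Notation r := (@mt_root T).
Local Notation par := (@mt_par T).
Local Notation f := (@mt_f T).

Definition leaf (u : V) : Prop := is_leaf r par u.
Definition below (x y : V) : Prop := anc par x y.

(* Points of the topological realisation at height h correspond bijectively
   to the non-root vertices v whose upward edge [v, par v) contains height h:
   the point at height h on the edge from v to par v (the vertex v itself if
   f v = h).  alive h v  says v represents a point of the level set L_h. *)
Definition alive (h : R) (v : V) : Prop :=
  v <> r /\ Rle (f v) h /\ (par v = r \/ Rlt h (f (par v))).

Definition layer_order (le : R -> V -> V -> Prop) : Prop :=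
  (forall h, Rle R0 h ->
     (forall x, alive h x -> le h x x) /\
     (forall x y, alive h x -> alive h y -> le h x y -> le h y x -> x = y) /\
     (forall x y z, alive h x -> alive h y -> alive h z ->
        le h x y -> le h y z -> le h x z) /\
     (forall x y, alive h x -> alive h y -> le h x y \/ le h y x)) /\
  (forall h1 h2 x1 x2 y1 y2, Rle R0 h1 -> Rle h1 h2 ->
     alive h1 x1 -> alive h1 x2 -> le h1 x1 x2 ->
     below x1 y1 -> alive h2 y1 -> below x2 y2 -> alive h2 y2 ->
     le h2 y1 y2).

(* u1 ⊑_L u2 : anc_h(u1) <=_h anc_h(u2), h = max (f u1) (f u2);
   anc_h(u) is represented by the (unique) vertex above u alive at h. *)
Definition sqL (le : R -> V -> V -> Prop) (u1 u2 : V) : Prop :=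
  let h := Rmax (f u1) (f u2) in
  exists w1 w2, below u1 w1 /\ alive h w1 /\ below u2 w2 /\ alive h w2 /\
                le h w1 w2.

Definition is_lca (w x y : V) : Prop :=
  below x w /\ below y w /\ forall w', below x w' -> below y w' -> below w w'.

End MT.

From Stdlib Require Import Reals Lra.
From mathcomp Require Import all_boot.
Set Implicit Arguments. Unset Strict Implicit.

(* Let w be the lca of u1 and u2 and H the larger of the heights of u and w.
   By consistency, u1 ⊑_L u and u ⊑_L u2 lift to level H, where the ancestor
   of u is then both above and below the ancestor of w in the order <=_H, so
   the two coincide.  If H is the height of w that ancestor is w itself, so u
   lies below w; otherwise it is u, so the leaf u lies above w, i.e. u = w. *)

Section MergeTreeFacts.
Variable T : merge_tree.
Local Notation V := (mt_V T).
Local Notation r := (@mt_root T).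
Local Notation par := (@mt_par T).
Local Notation f := (@mt_f T).
Local Notation below := (@below T).
Local Notation alive := (@alive T).
Local Notation leaf := (@leaf T).

Lemma below_refl x : below x x.
Proof. by exists 0%N. Qed.

Lemma below_trans x y z : below x y -> below y z -> below x z.
Proof. by move=> [n <-] [m <-]; exists (m + n)%N; rewrite iterD. Qed.

Lemma below_par x y : below x y -> x <> y -> below (par x) y.
Proof. by case=> [[|n]] //= <- _; exists n; rewrite -iterSr. Qed.

Lemma below_total u x y : below u x -> below u y -> below x y \/ below y x.
Proof.
case=> n <- [m <-]; have [le_nm | lt_mn] := leqP n m.
- by left; exists (m - n)%N; rewrite -iterD subnK.
- by right; exists (n - m)%N; rewrite -iterD subnK // ltnW.
Qed.

Lemma below_nonroot_f_le x y :
  below x y -> y <> r -> x <> r /\ Rle (f x) (f y).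
Proof.
case=> n <-; elim: n x => [|n IHn] x /=; first by split; [|apply: Rle_refl].
rewrite -iterS iterSr => pxr.
have [px_neq_r le_fpx] := IHn (par x) pxr.
have x_neq_r : x <> r by move=> xr; apply: px_neq_r; rewrite xr mt_par_root.
by split=> //; have := mt_incr x_neq_r px_neq_r; lra.
Qed.

Lemma below_f_le x y : below x y -> y <> r -> Rle (f x) (f y).
Proof. by move=> xy yr; case: (below_nonroot_f_le xy yr). Qed.

Lemma alive_self v : v <> r -> alive (f v) v.
Proof.
move=> vr; split=> //; split; first exact: Rle_refl.
by case: (eqVneq (par v) r) => [|/eqP pvr]; [left | right; exact: mt_incr].
Qed.

Lemma exists_alive_above u h :
  u <> r -> Rle (f u) h -> exists y, below u y /\ alive h y.
Proof.
have [n] := mt_rooted u; elim: n u => [|n IHn] u //=.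
rewrite -iterS iterSr => pu_root ur le_fu_h.
have alive_u : (par u = r \/ Rlt h (f (par u))) -> exists y, below u y /\ alive h y.
  by move=> Hpar; exists u; split; [exact: below_refl | do !split].
case: (eqVneq (par u) r) => [|/eqP pur]; first by move=> pur; apply: alive_u; left.
have [lt_h_fpu | le_fpu_h] := Rlt_le_dec h (f (par u)); first by apply: alive_u; right.
have [y [[k <-] alive_y]] := IHn (par u) pu_root pur le_fpu_h.
by exists (iter k par (par u)); split=> //; exists k.+1; rewrite iterSr.
Qed.

Lemma below_alive_above u x y h H : Rle h H -> alive h x -> alive H y ->
  below u x -> below u y -> below x y.
Proof.
move=> le_hH [xr [le_fx_h _]] [_ [_ par_y]] ux uy.
case: (below_total ux uy) => // yx.
case: (eqVneq y x) => [->|/eqP y_neq_x]; first exact: below_refl.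
have [pyr le_fpy] := below_nonroot_f_le (below_par yx y_neq_x) xr.
by case: par_y => // lt_H_fpy; lra.
Qed.

Lemma leaf_below_eq x u : leaf u -> below x u -> x = u.
Proof. by move=> [_ no_child] [[|n]] //= pxu; case: (no_child _ pxu). Qed.

Lemma leaf_f_ge0 u : leaf u -> Rle R0 (f u).
Proof. exact: (mt_lowest_leaf T).2. Qed.

Variable le : R -> V -> V -> Prop.
Hypothesis le_layer : layer_order le.

Lemma sqL_lift u1 u2 H y1 y2 :
  Rle R0 (f u1) -> sqL le u1 u2 -> Rle (Rmax (f u1) (f u2)) H ->
  below u1 y1 -> alive H y1 -> below u2 y2 -> alive H y2 -> le H y1 y2.
Proof.
move=> fu1_ge0 [x1 [x2 [u1x1 [alive_x1 [u2x2 [alive_x2 le_x12]]]]]] le_hH.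
move=> u1y1 alive_y1 u2y2 alive_y2.
have h_ge0 := Rle_trans _ _ _ fu1_ge0 (Rmax_l (f u1) (f u2)).
apply: (le_layer.2 (Rmax (f u1) (f u2)) _ x1 x2) => //.
- exact: (below_alive_above le_hH alive_x1 alive_y1 u1x1 u1y1).
- exact: (below_alive_above le_hH alive_x2 alive_y2 u2x2 u2y2).
Qed.

Lemma sqL_between_alive_eq u u1 u2 H x y :
  Rle R0 (f u1) -> Rle R0 (f u) -> sqL le u1 u -> sqL le u u2 ->
  Rle (f u1) H -> Rle (f u) H -> Rle (f u2) H ->
  below u1 x -> below u2 x -> alive H x -> below u y -> alive H y -> x = y.
Proof.
move=> fu1_ge0 fu_ge0 S1 S2 le1 le0 le2 u1x u2x alive_x uy alive_y.
have [_ [le_anti _]] := le_layer.1 H (Rle_trans _ _ _ fu_ge0 le0).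
apply: le_anti => //.
- by apply: (sqL_lift fu1_ge0 S1) => //; apply: Rmax_lub.
- by apply: (sqL_lift fu_ge0 S2) => //; apply: Rmax_lub.
Qed.

End MergeTreeFacts.

Theorem lemma3 (T : merge_tree) (le : R -> mt_V T -> mt_V T -> Prop) :
  layer_order le ->
  forall u u1 u2 : mt_V T, leaf u -> leaf u1 -> leaf u2 ->
    sqL le u1 u -> sqL le u u2 ->
    forall w, is_lca w u1 u2 -> below u w.
Proof.
move=> le_layer u u1 u2 Lu Lu1 _ S1 S2 w [u1w [u2w _]].
case: (eqVneq w (mt_root T)) => [->|/eqP wr]; first exact: mt_rooted.
have ur : u <> mt_root T by case: Lu.
have le_fu1 := below_f_le u1w wr; have le_fu2 := below_f_le u2w wr.
have between := sqL_between_alive_eq le_layer (leaf_f_ge0 Lu1) (leaf_f_ge0 Lu) S1 S2.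
have [le_fu_fw | lt_fw_fu] := Rle_lt_dec (mt_f u) (mt_f w).
- have [y [uy alive_y]] := exists_alive_above ur le_fu_fw.
  suff -> : w = y by [].
  exact: between le_fu1 le_fu_fw le_fu2 u1w u2w (alive_self wr) uy alive_y.
- have le_fw_fu := Rlt_le _ _ lt_fw_fu.
  have [x [wx alive_x]] := exists_alive_above wr le_fw_fu.
  have x_eq_u : x = u.
    apply: between (below_trans u1w wx) (below_trans u2w wx) alive_x
                   (below_refl u) (alive_self ur); lra.
  by rewrite x_eq_u in wx; rewrite (leaf_below_eq Lu wx); apply: below_refl.
Qed.
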